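(* In the setting of the context, for every $j\in[N]$, $s\in\Gamma$, $k\in[n]$ and $\dagger\in\{+,-\}$, $$\nu^{s\bar P}\big(\pi_{s\bar P}\varphi(Z^\dagger_{j,s,k})\big)\le\frac1{M_k}\int u^\dagger_k\,d\nu^{sP}.$$
   Context: Standing setting: $\Gamma$ countably infinite, $n\in\mathbb N$, $\mathbb Z\Gamma$ the integral group ring (product $(fg)_t=\sum_sf_{ts^{-1}}g_s$, involution $(f^* )_s=f_{s^{-1}}$, $(f^* )^{(km)}=(f^{(mk)})^*$). $f=M-g\in M_n(\mathbb Z\Gamma)$, $M=\mathrm{diag}(M_1,\dots,M_n)$ positive integers, $M_k>\sum_m\|g^{(km)}\|_1$, and a subsemigroup $P\subseteq\Gamma\setminus\{e_\Gamma\}$ containing all $\mathrm{supp}(g^{(km)})$; $\bar P=P\cup\{e_\Gamma\}$, $\bar M=\max_kM_k$, $S_f=\prod_k\{0,\dots,M_k-1\}$, $Y=S_f^\Gamma$ (row vectors, entries $y_{s,k}$, $(yF)_m=\sum_ky_kF^{(km)}$ by convolution). $\nu$ is a probability measure on $S_f$ whose marginal on each factor $\{0,\dots,M_k-1\}$ is uniform; for $E\subseteq\Gamma$, $\nu^E$ is the product measure on $S_f^E$ and $\pi_E:S_f^\Gamma\to S_f^E$ the restriction. $N\ge\bar M\|(f^* )^{-1}\|_{1,\infty}$ fixed integer, $V=(\{-N,\dots,N\}^\Gamma)^n\setminus\{0\}$, $Z=\{(y,c)\in Y\times V: y+cf^*\in Y\}$, $\varphi:Y\times V\to Y$ the projection,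 $Z^+_{j,s,k}=\{(y,c)\in Z:\max_{t,m}|c_{t,m}|=c_{s,k}=j\}$, $Z^-_{j,s,k}=\{(y,c)\in Z:\max_{t,m}|c_{t,m}|=-c_{s,k}=j\}$. $A_k=\{(a,m):g^{(km)}_a\neq0\}$; for $B_k\subseteq A_k$ and $\dagger\in\{+,-\}$, $Z^\dagger_{j,s,k,B_k}$ is the set of $(y,c)\in Z^\dagger_{j,s,k}$ with $c_{sa,m}=\dagger\mathrm{sgn}(g^{(km)}_a)j$ for $(a,m)\in B_k$ and $c_{sa,m}\neq\dagger\mathrm{sgn}(g^{(km)}_a)j$ for $(a,m)\in A_k\setminus B_k$, and $Z^\dagger_{j,s,k,B_k,i}=\{(y,c)\in Z^\dagger_{j,s,k,B_k}:y_{s,k}=i\}$. Finally $u^\dagger_k:S_f^{sP}\to\mathbb R$ is $u^\dagger_k=\sum_{i=0}^{M_k-1}\chi_{\pi_{sP}\varphi(\bigcup_{B_k\subseteq A_k}Z^\dagger_{j,s,k,B_k,i})}$ ($\chi$ denotes characteristic function). *)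

From HB Require Export structures.
From mathcomp Require Export all_boot all_order all_algebra.
From mathcomp Require Export all_classical all_reals all_analysis.
Unset Implicit Arguments.
Import Order.TTheory GRing.Theory Num.Theory.
Local Open Scope classical_set_scope.
Local Open Scope ring_scope.

Definition group_axioms (G : Type) (mul : G -> G -> G) (inv : G -> G) (e : G) :=
  [/\ forall a b c, mul a (mul b c) = mul (mul a b) c,
      forall a, mul e a = a, forall a, mul a e = a,
      forall a, mul (inv a) a = e & forall a, mul a (inv a) = e].

Section Setting.
Variables (G : countType) (mul : G -> G -> G) (inv : G -> G) (e : G).
Variables (n : nat) (M : 'I_n -> nat).

(* ---------- integral group ring elements: finitely supported G -> int ---------- *)
Definition supp (h : G -> int) : set G := [set a | h a != 0].
Definition finsupp (h : G -> int) := finite_set (supp h).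
Definition norm1Z (h : G -> int) : int := (\sum_(a \in supp h) `|h a|)%R.
Definition star (h : G -> int) : G -> int := fun s => h (inv s).

Definition fmat (g : 'I_n -> 'I_n -> G -> int) (k m : 'I_n) : G -> int :=
  fun a => (if (k == m) && (a == e) then (M k)%:Z else 0) - g k m a.
Definition fstar (g : 'I_n -> 'I_n -> G -> int) (k m : 'I_n) : G -> int :=
  star (fmat g m k).

Definition convZ (x h : G -> int) : G -> int :=
  fun t => (\sum_(s \in supp h) x (mul t (inv s)) * h s)%R.
Definition rowmulZ (c : G -> 'I_n -> int) (F : 'I_n -> 'I_n -> G -> int)
  : G -> 'I_n -> int :=
  fun t m => (\sum_(k < n) convZ (fun s => c s k) (F k m) t)%R.

Variable R : realType.
Definition ell1 (h : G -> R) := (\esum_(t in [set: G]) (`|h t|)%:E < +oo)%E.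
Definition norm1R (h : G -> R) : \bar R := (\esum_(t in [set: G]) (`|h t|)%:E)%E.
Definition convZR (a : G -> int) (h : G -> R) : G -> R :=
  fun t => (\sum_(u \in supp a) (a u)%:~R * h (mul (inv u) t))%R.
Definition convRZ (h : G -> R) (a : G -> int) : G -> R :=
  fun t => (\sum_(s \in supp a) h (mul t (inv s)) * (a s)%:~R)%R.
Definition deltaR (k m : 'I_n) : G -> R := fun t => ((k == m) && (t == e))%:R.
Definition is_inverse_of_fstar (g : 'I_n -> 'I_n -> G -> int)
  (h : 'I_n -> 'I_n -> G -> R) :=
  [/\ forall k m, ell1 (h k m),
      forall k m, (fun t => \sum_(l < n) convZR (fstar g k l) (h l m) t) = deltaR k m
    & forall k m, (fun t => \sum_(l < n) convRZ (h k l) (fstar g l m) t) = deltaR k m].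
(* ||H||_{1,oo} = max_m sum_k ||H^{(km)}||_1 : operator norm of x |-> x H on (l^oo)^n *)
Definition norm1oo (h : 'I_n -> 'I_n -> G -> R) : \bar R :=
  (\big[maxe/0%E]_(m < n) \sum_(k < n) norm1R (h k m))%E.

(* S_f = prod_k {0,...,M_k - 1}; written with 'I_((M k).-1.+1), which is 'I_(M k)
   under the standing hypothesis 0 < M k (this makes S_f canonically pointed). *)
Definition Sf := {dffun forall k : 'I_n, 'I_((M k).-1.+1)}.
HB.instance Definition _ := Finite.on Sf.
HB.instance Definition _ := isPointed.Build Sf (finfun (fun k => ord0)).
Definition conf := G -> Sf.
Definition coord (E : set G) := {t : G | E t}.
Definition confE (E : set G) := coord E -> Sf.
Definition restr (E : set G) (y : conf) : confE E := fun t => y (sval t).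

Definition cyl (E : set G) (ts : seq G) (w : G -> Sf) : set (confE E) :=
  [set x | forall t : coord E, sval t \in ts -> x t = w (sval t)].
Definition cylinders (E : set G) : set (set (confE E)) :=
  [set A | exists ts w, A = cyl E ts w].

(* mu is the product measure nu^E: it agrees with prod nu on cylinders
   (this determines it uniquely on the product sigma-algebra) *)
Definition is_product_measure (nu : Sf -> R) (E : set G)
  (mu : probability (g_sigma_algebraType (cylinders E)) R) :=
  forall ts w, mu (cyl E ts w) = (\prod_(t <- undup ts | `[< E t >]) nu (w t))%:E.

Definition inY (z : G -> 'I_n -> int) := forall t m, 0 <= z t m < (M m)%:Z.
Definition inV (N : nat) (c : G -> 'I_n -> int) :=
  (forall t m, `|c t m| <= N%:Z) /\ exists t m, c t m != 0.
Definition yZ (y : conf) : G -> 'I_n -> int := fun t m => (nat_of_ord (y t m))%:Z.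
Definition Zset (g : 'I_n -> 'I_n -> G -> int) (N : nat)
  : set (conf * (G -> 'I_n -> int)) :=
  [set yc | inV N yc.2 /\ inY (fun t m => yZ yc.1 t m + rowmulZ yc.2 (fstar g) t m)].
Definition is_maxabs (c : G -> 'I_n -> int) (j : int) :=
  (forall t m, `|c t m| <= j) /\ exists t m, `|c t m| = j.
Definition sgnb (d : bool) : int := if d then 1 else -1.
(* Z^dagger_{j,s,k}, with dagger = + iff d = true *)
Definition Zd g N (d : bool) (j : nat) (s : G) (k : 'I_n) :=
  [set yc | Zset g N yc /\ is_maxabs yc.2 j%:Z /\ yc.2 s k = sgnb d * j%:Z].
Definition Aset (g : 'I_n -> 'I_n -> G -> int) (k : 'I_n) : set (G * 'I_n) :=
  [set am | g k am.2 am.1 != 0].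
Definition ZdB g N d j s k (B : set (G * 'I_n)) :=
  [set yc | Zd g N d j s k yc /\
     (forall am, B am -> yc.2 (mul s am.1) am.2 = sgnb d * sgz (g k am.2 am.1) * j%:Z) /\
     (forall am, Aset g k am -> ~ B am ->
        yc.2 (mul s am.1) am.2 != sgnb d * sgz (g k am.2 am.1) * j%:Z)].
Definition ZdBi g N d j s k B (i : nat) :=
  [set yc | ZdB g N d j s k B yc /\ nat_of_ord (yc.1 s k) = i].
Definition phi (yc : conf * (G -> 'I_n -> int)) : conf := yc.1.

Definition lset (s : G) (P : set G) : set G := [set mul s p | p in P].
Definition Pbar (P : set G) : set G := P `|` [set e].

Definition u_fun g N d j s k (P : set G) : confE (lset s P) -> R :=
  fun x => (\sum_(i < M k)
    \1_(restr (lset s P) @` (phi @`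
        \bigcup_(B in [set B | B `<=` Aset g k]) ZdBi g N d j s k B i)) x)%R.

End Setting.

From mathcomp Require Import zify measurable_realfun.
Import Order.TTheory GRing.Theory Num.Theory.
Local Open Scope classical_set_scope.
Local Open Scope ring_scope.

(* Split a configuration x on s Pbar = {s} + sP into its value
   a = x_s and its restriction to sP.  If x comes from (y, c) in Z^dagger_{j,s,k}
   then its restriction lies in T_i := pi_{sP} phi(Z^dagger_{j,s,k} /\ {y_{s,k} = i})
   with i = a_k.  As s is not in sP, nu^{s Pbar} is the product nu x nu^{sP}, so
     nu^{s Pbar}(pi phi Z) <= sum_a nu(a) nu^{sP}(T_{a_k})
                            = (1/M_k) sum_i nu^{sP}(T_i)   (uniform marginals)
                            = (1/M_k) int u^dagger_k d nu^{sP},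
   because u^dagger_k is exactly the sum of the indicators of the T_i.
   The only delicate point is measurability of these projections in the
   product sigma-algebra.  We show it by compactness: after encoding c
   coordinatewise, Z^dagger_{j,s,k} is a closed subset of a product of finite
   sets (every defining condition involves finitely many coordinates), and by
   König's lemma the projection of such a closed set is a countable
   intersection of countable unions of cylinders. *)

(* A set K of configurations G -> W is closed for the product topology when
   a configuration agreeing with members of K on every finite initial segment
   of G (enumerated by pickle) belongs to K. *)
Definition limit_closed {G : countType} {W : Type} (K : set (G -> W)) :=
  forall z, (forall m, exists2 z', K z' & forall t, (pickle t < m)%N -> z' t = z t) ->
  K z.

(* König's lemma (compactness of W^G for finite W): if a closed set K contains,
   for every m, a configuration whose image under p matches x on the first m
   points of E, then it contains one matching x on all of E. *)
Section Koenig.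
Variables (G : countType) (W : finType) (w0 : W) (V : Type) (p : W -> V).
Variables (E : set G) (x : G -> V) (K : set (G -> W)).
Hypothesis K_closed : limit_closed K.

Let matches m z := K z /\ (forall t, E t -> (pickle t < m)%N -> p (z t) = x t).
Hypothesis matches_ex : forall m, exists z, matches m z.

Let extends (w : seq W) (z : G -> W) :=
  forall t, (pickle t < size w)%N -> z t = nth w0 w (pickle t).
Let extendable w := forall m, exists z, matches m z /\ extends w z.

(* pigeonhole over the finite alphabet: an extendable word has an extendable
   one-letter extension *)
Let extendable_step w : extendable w -> exists a, extendable (rcons w a).
Proof.
move=> ext_w; apply: boolp.contrapT => no_ext.
have /choice [bad bad_spec] :
    forall a, exists m, ~ exists z, matches m z /\ extends (rcons w a) z.
  by move=> a; apply/existsNP => ext_a; apply: no_ext; exists a.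
have [z [[Kz zx] zw]] := ext_w (\max_(a : W) bad a).
pose a := if pickle_inv (size w) is Some t then z t else w0.
apply: (bad_spec a); exists z; split; first split => //.
  by move=> t Et lt; apply: zx => //; apply: leq_trans lt (leq_bigmax _).
move=> t; rewrite size_rcons ltnS leq_eqVlt nth_rcons => /orP[/eqP ht|ht].
  by rewrite ht ltnn eqxx /a -ht pickleK_inv.
by rewrite ht; apply: zw.
Qed.

Let next_letter w := if pselect (exists a, extendable (rcons w a)) is left h
  then proj1_sig (cid h) else w0.

Fixpoint branch m := if m is m'.+1 then rcons (branch m') (next_letter (branch m'))
  else [::].

Let size_branch m : size (branch m) = m.
Proof. by elim: m => //= m IH; rewrite size_rcons IH. Qed.

Let extendable_branch m : extendable (branch m).
Proof.
elim: m => [|m IH] /=.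
  by move=> m; have [z mz] := matches_ex m; exists z; split => // t; rewrite ltn0.
rewrite /next_letter; case: pselect => [h|h]; first exact: proj2_sig (cid h).
by case: h; apply: extendable_step.
Qed.

Let nth_branch {i m m'} : (i < m)%N -> (m <= m')%N ->
  nth w0 (branch m') i = nth w0 (branch m) i.
Proof.
move=> im; elim: m' => [|m' IH]; first by rewrite leqn0 => /eqP ->.
rewrite leq_eqVlt => /orP[/eqP -> //|]; rewrite ltnS => mm'.
by rewrite -(IH mm') /= nth_rcons size_branch (leq_trans im mm').
Qed.

Let limit (t : G) := nth w0 (branch (pickle t).+1) (pickle t).

Let limit_branch {m t} : (pickle t < m)%N -> limit t = nth w0 (branch m) (pickle t).
Proof.
move=> lt; rewrite /limit; case: (leqP (pickle t).+1 m) => h.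
  by rewrite (nth_branch (ltnSn _) h).
by rewrite (nth_branch lt (ltnW h)).
Qed.

Lemma koenig : exists2 z, K z & forall t, E t -> p (z t) = x t.
Proof.
exists limit.
  apply: K_closed => m; have [z [[Kz _] zb]] := extendable_branch m m.
  by exists z => // t lt; rewrite zb ?size_branch // (limit_branch lt).
move=> t Et; have [z [[_ zx] zb]] := extendable_branch (pickle t).+1 (pickle t).+1.
by rewrite (limit_branch (ltnSn _)) -zb ?size_branch // zx.
Qed.
End Koenig.

Notation cylspace G n M E := (g_sigma_algebraType (cylinders G n M E)).

(* Images of closed sets of configurations under coordinatewise maps are
   measurable: such an image is the countable intersection over m of the sets
   of restrictions agreeing with the image on the first m points, each of which
   is a countable union of cylinders; König's lemma gives the reverse
   inclusion. *)
Section ClosedImage.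
Variables (G : countType) (n : nat) (M : 'I_n -> nat).

Definition first_points (m : nat) : seq G := pmap pickle_inv (iota 0 m).

Lemma mem_first_points m t : (t \in first_points m) = (pickle t < m)%N.
Proof.
rewrite mem_pmap; apply/mapP/idP => [[i]|lt].
  rewrite mem_iota add0n => /andP[_ lt] ti.
  by have := @pickle_invK G i; rewrite -ti /= => ->.
by exists (pickle t); rewrite ?pickleK_inv // mem_iota add0n.
Qed.

Definition word_conf m (w : seq (Sf n M)) (t : G) : Sf n M :=
  nth point w (index t (first_points m)).

Lemma word_conf_map m (f : G -> Sf n M) t :
  (pickle t < m)%N -> word_conf m (map f (first_points m)) t = f t.
Proof.
rewrite -mem_first_points => tm.
by rewrite /word_conf (nth_map t) ?index_mem // nth_index.
Qed.

Variables (E : set G) (W : finType) (w0 : W) (p : W -> Sf n M) (K : set (G -> W)).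
Hypothesis K_closed : limit_closed K.

Let approx_image m := [set x : confE G n M E | exists2 z, K z &
  forall t : coord G E, (pickle (sval t) < m)%N -> x t = p (z (sval t))].

Let approx_image_measurable m :
  measurable (approx_image m : set (cylspace G n M E)).
Proof.
pose codes := [set pickle (map (p \o z) (first_points m)) | z in K].
pose piece i := cyl G n M E (first_points m) (word_conf m (odflt [::] (unpickle i))).
have -> : approx_image m = \bigcup_(i in codes) piece i.
  apply/seteqP; split => [x [z Kz xz]|x [_ [z Kz <-]]].
    exists (pickle (map (p \o z) (first_points m))); first by exists z.
    by move=> t; rewrite /piece pickleK mem_first_points => tm; rewrite xz // word_conf_map.
  rewrite /piece pickleK => xz; exists z => // t tm.
  by rewrite xz ?mem_first_points // word_conf_map.
apply: bigcup_measurable => i _; apply: sub_sigma_algebra.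
by exists (first_points m), (word_conf m (odflt [::] (unpickle i))).
Qed.

Let image_bigcap :
  [set restr G n M E (p \o z) | z in K] = \bigcap_(m in [set: nat]) approx_image m.
Proof.
apply/seteqP; split => [_ [z Kz <-] m _|x xK]; first by exists z.
pose x' t := if pselect (E t) is left Et then x (exist _ t Et) else point.
have [z Kz zx] : exists2 z, K z & forall t, E t -> p (z t) = x' t.
  apply: (koenig G W w0 _ p E x' K K_closed) => m; have [z Kz xz] := xK m Logic.I.
  exists z; split => // t Et tm.
  by rewrite /x'; case: pselect => // Et'; rewrite xz.
exists z => //; apply: boolp.funext => -[t Et] /=; rewrite /restr /= zx // /x'.
by case: pselect => // Et'; congr x; apply: eq_exist.
Qed.

Lemma closed_image_measurable :
  measurable ([set restr G n M E (p \o z) | z in K] : set (cylspace G n M E)).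
Proof.
rewrite image_bigcap; apply: bigcap_measurable; first by exists 0%N.
by move=> m _; apply: approx_image_measurable.
Qed.
End ClosedImage.

Lemma finite_pickle_bound (G : countType) (A : set G) :
  finite_set A -> exists m, forall a, A a -> (pickle a < m)%N.
Proof.
move=> /finite_fsetP [X ->]; exists (\max_(a <- finmap.enum_fset X) (pickle a).+1)%N.
by move=> a aX; apply: (@leq_bigmax_seq _ _ xpredT (fun a : G => (pickle a).+1)).
Qed.

Lemma group_invK (G : Type) mul inv (e : G) : group_axioms G mul inv e ->
  forall a, inv (inv a) = a.
Proof. by case=> mA m1 m2 mV _ a; rewrite -[LHS]m2 -(mV a) mA mV m1. Qed.

(* The set Z^dagger_{j,s,k} (intersected with a condition P0 on the value of y
   at s) becomes a closed set of configurations over a finite alphabet once c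
   is encoded coordinatewise: every defining condition only involves finitely
   many coordinates.  Hence its projections to S_f^E are measurable. *)
Section ZdClosed.
Variables (G : countType) (mul : G -> G -> G) (inv : G -> G) (e : G).
Hypothesis HG : group_axioms G mul inv e.
Variables (n : nat) (M : 'I_n -> nat) (g : 'I_n -> 'I_n -> G -> int).
Hypothesis g_finsupp : forall k m, finsupp G (g k m).
Variables (N : nat) (d : bool) (j : nat) (s : G) (k : 'I_n).
Hypothesis j_gt0 : (0 < j)%N.

(* the letters: a value of y and a value of c, the latter in {-N, ..., N} *)
Definition letter := (Sf n M * {ffun 'I_n -> 'I_(2 * N).+1})%type.
Definition unclamp (o : 'I_(2 * N).+1) : int := o%:Z - N%:Z.
Definition clamp (v : int) : 'I_(2 * N).+1 := inord (absz (v + N%:Z)).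
Definition decode (z : G -> letter) : conf G n M * (G -> 'I_n -> int) :=
  (fun t => (z t).1, fun t m => unclamp ((z t).2 m)).
Definition encode (yc : conf G n M * (G -> 'I_n -> int)) : G -> letter :=
  fun t => (yc.1 t, [ffun m => clamp (yc.2 t m)]).

Lemma unclamp_bound o : `|unclamp o| <= N%:Z.
Proof. by rewrite /unclamp; have := ltn_ord o; lia. Qed.

Lemma decode_encode yc : (forall t m, `|yc.2 t m| <= N%:Z) -> decode (encode yc) = yc.
Proof.
case: yc => y c /= cN; congr pair; apply: boolp.funext => t; apply: boolp.funext => m.
have cNtm := cN t m; rewrite ffunE /unclamp /clamp /= inordK; first lia.
by rewrite ltnS; lia.
Qed.

Lemma supp_fstar_finite k' m : finite_set (supp G (fstar G inv e n M g k' m)).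
Proof.
apply: (@sub_finite_set _ _ (inv @` ([set e] `|` supp G (g m k')))).
  move=> a; rewrite /supp /fstar /star /fmat /= => fa.
  exists (inv a); last exact: group_invK HG a.
  case: (eqVneq (inv a) e) => [->|ne]; [by left|right].
  by move: fa; rewrite (negbTE ne) andbF sub0r oppr_eq0.
by apply: finite_image; rewrite finite_setU; split; [apply: finite_set1|apply: g_finsupp].
Qed.

(* the coordinates of c on which (c f^* )_{t,m} depends *)
Definition window (t : G) (m : 'I_n) : set G :=
  \bigcup_(k' in [set: 'I_n]) [set mul t (inv a) | a in supp G (fstar G inv e n M g k' m)].

Lemma window_finite t m : finite_set (window t m).
Proof.
apply: bigcup_finite; first exact: finite_finset.
by move=> k' _; apply: finite_image; apply: supp_fstar_finite.
Qed.

Lemma rowmulZ_window (c c' : G -> 'I_n -> int) t m :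
  (forall a, window t m a -> c a = c' a) ->
  rowmulZ G mul inv n c (fstar G inv e n M g) t m =
  rowmulZ G mul inv n c' (fstar G inv e n M g) t m.
Proof.
move=> cc'; apply: eq_bigr => k' _; apply: eq_fsbigr => a; rewrite inE => fa.
by rewrite cc' //; exists k' => //; exists a.
Qed.

Definition Zcode (P0 : Sf n M -> Prop) : set (G -> letter) :=
  [set z | Zd G mul inv e n M g N d j s k (decode z) /\ P0 ((decode z).1 s)].

(* each condition defining Zcode concerns finitely many coordinates (the
   coordinate s, or a coordinate t together with window t m), where a limit
   of members of Zcode agrees with one of them *)
Lemma Zcode_closed P0 : limit_closed (Zcode P0).
Proof.
move=> z approx.
have agree A : finite_set A -> exists2 z', Zcode P0 z' & forall a, A a -> z' a = z a.
  move=> /finite_pickle_bound [m Am]; have [z' Zz' zz'] := approx m.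
  by exists z' => // a /Am; apply: zz'.
have agree1 t : exists2 z', Zcode P0 z' & z' t = z t.
  by have [z' Zz' zz'] := agree _ (finite_set1 t); exists z' => //; apply: zz'.
have [zs [[[_ _] [_ zs_sk]] P0s] zss] := agree1 s.
have c_sk : (decode z).2 s k = sgnb d * j%:Z by rewrite /decode /= -zss.
have c_sk_abs : `|(decode z).2 s k| = j%:Z by rewrite c_sk; case: d => /=; lia.
split; last by rewrite /decode /= -zss.
split; [split; [split|] | split; [split|]].
- by move=> t m; apply: unclamp_bound.
- by exists s, k; rewrite -normr_gt0 c_sk_abs; lia.
- move=> t m; have [|z' [[[_ Yz'] _] _] zz'] := agree ([set t] `|` window t m).
    by rewrite finite_setU; split; [apply: finite_set1 | apply: window_finite].
  have y_t : (decode z).1 t = (decode z').1 t by rewrite /= zz' //; left.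
  rewrite /yZ y_t -(rowmulZ_window (decode z').2) => [|a wa]; first exact: Yz'.
  by rewrite /= zz' //; right.
- move=> t m; have [z' [[_ [[bound _] _]] _] zt] := agree1 t.
  by have := bound t m; rewrite /decode /= zt.
- by exists s, k.
- exact: c_sk.
Qed.

Definition Zproj (E : set G) (P0 : Sf n M -> Prop) : set (confE G n M E) :=
  restr G n M E @` (phi G n M @`
    [set yc | Zd G mul inv e n M g N d j s k yc /\ P0 (yc.1 s)]).

(* Zproj is the image of the closed set Zcode under the first letter component *)
Lemma Zproj_measurable E P0 :
  measurable (Zproj E P0 : set (cylspace G n M E)).
Proof.
have -> : Zproj E P0 = [set restr G n M E (fst \o z) | z in Zcode P0].
  apply/seteqP; split => [_ [_ [yc [Zyc P0yc] <-] <-]|_ [z Zz <-]].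
    have [[[cN _] _] _] := Zyc.
    by exists (encode yc); rewrite /Zcode /= ?decode_encode.
  by exists (decode z).1 => //; exists (decode z).
exact (closed_image_measurable G n M E letter (point, [ffun=> ord0]) fst _ (Zcode_closed P0)).
Qed.
End ZdClosed.

Lemma cyl_setI (G : countType) (n : nat) (M : 'I_n -> nat) (E : set G) ts w ts' w' :
  cyl G n M E ts w `&` cyl G n M E ts' w' = set0 \/
  cyl G n M E ts w `&` cyl G n M E ts' w' =
    cyl G n M E (ts ++ ts') (fun t => if t \in ts then w t else w' t).
Proof.
case: (pselect (forall t : coord G E, sval t \in ts -> sval t \in ts' ->
   w (sval t) = w' (sval t))) => [ww'|ww']; [right|left].
  apply/seteqP; split => x.
    by move=> [xw xw'] t; rewrite mem_cat; case: ifP => [/xw //|_ /= /xw'].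
  move=> xc; split => t tts; first by rewrite xc ?mem_cat ?tts.
  by rewrite xc ?mem_cat ?tts ?orbT //; case: ifP => // /ww'; apply.
apply/seteqP; split => // x [xw xw']; apply: ww' => t tts tts'.
by rewrite -xw // -xw'.
Qed.

(* A finite measure on S_f^E is determined by its values on cylinders, which
   (with the empty set) form a pi-system generating the sigma-algebra. *)
Lemma cylinder_measure_unique (G : countType) (n : nat) (M : 'I_n -> nat)
    (E : set G) (R : realType) (mu1 mu2 : {measure set (cylspace G n M E) -> \bar R}) :
  (mu1 setT < +oo)%E ->
  (forall ts w, mu1 (cyl G n M E ts w) = mu2 (cyl G n M E ts w)) ->
  forall A, measurable A -> mu1 A = mu2 A.
Proof.
move=> mu1_fin mu12.
pose pi_sys : set (set (cylspace G n M E)) := [set B | cylinders G n M E B \/ B = set0].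
have cylT : cyl G n M E [::] (fun _ => point) = setT by apply/seteqP; split.
apply: (measure_unique pi_sys (fun _ => setT)) => //.
- rewrite eqEsubset; split; apply: smallest_sub; try exact: smallest_sigma_algebra.
    by move=> B cB; apply: sub_sigma_algebra; left.
  by move=> B [cB|->]; [apply: sub_sigma_algebra | apply: measurable0].
- move=> B C [[ts [w ->]]|->] [[ts' [w' ->]]|->]; rewrite ?set0I ?setI0; try by right.
  have [->|->] := cyl_setI G n M E ts w ts' w'; [by right | left].
  by exists (ts ++ ts'), (fun t => if t \in ts then w t else w' t).
- by move=> _; left; exists [::], (fun _ => point).
- by rewrite bigcup_const.
- by move=> B [[ts [w ->]]|->]; rewrite ?measure0.
Qed.

Section Restriction.
Variables (G : countType) (n : nat) (M : 'I_n -> nat) (E E' : set G).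
Hypothesis EE' : forall t, E t -> E' t.

Definition incl (t : coord G E) : coord G E' :=
  exist _ (sval t) (EE' (sval t) (proj2_sig t)).
Definition restrict (x : confE G n M E') : confE G n M E := fun t => x (incl t).

Lemma restrict_cyl ts w :
  restrict @^-1` (cyl G n M E ts w) = cyl G n M E' [seq t <- ts | `[< E t >]] w.
Proof.
apply/seteqP; split => x xc [t E't] /=.
  rewrite mem_filter => /andP[/asboolP Et tts].
  have -> : exist _ t E't = incl (exist _ t Et) by apply: eq_exist.
  exact: xc.
by move=> tts; apply: xc; rewrite /= mem_filter tts andbT; apply/asboolP.
Qed.

Lemma restrict_measurable :
  @measurable_fun _ _ (cylspace G n M E') (cylspace G n M E) setT restrict.
Proof.
apply: (@measurability _ _ (cylspace G n M E') (cylspace G n M E) setT restrict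
  (cylinders G n M E)) => //.
move=> _ [B [ts [w ->]] <-]; rewrite setTI restrict_cyl.
by apply: sub_sigma_algebra; exists [seq t <- ts | `[< E t >]], w.
Qed.

Variables (s : G) (a : Sf n M) (R : realType).
Variable mu : {measure set (cylspace G n M E') -> \bar R}.

Definition at_point : set (cylspace G n M E') := cyl G n M E' [:: s] (fun _ => a).

Lemma slice_set_measurable (A : set (cylspace G n M E)) : measurable A ->
  measurable (at_point `&` restrict @^-1` A).
Proof.
move=> mA; apply: measurableI; first by apply: sub_sigma_algebra; exists [:: s], (fun _ => a).
by rewrite -[X in measurable X]setTI; apply: restrict_measurable.
Qed.

Definition slice (A : set (cylspace G n M E)) : \bar R := mu (at_point `&` restrict @^-1` A).

Let slice0 : slice set0 = 0%E.
Proof. by rewrite /slice preimage_set0 setI0 measure0. Qed.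

Let slice_ge0 A : (0 <= slice A)%E.
Proof. exact: measure_ge0. Qed.

Let slice_sigma_additive : semi_sigma_additive slice.
Proof.
move=> F mF tF mUF; rewrite /slice preimage_bigcup setI_bigcupr.
apply: measure_semi_sigma_additive.
- by move=> i; apply: slice_set_measurable.
- apply/trivIsetP => /= i i' _ _ ii'; rewrite setIACA setIid -preimage_setI.
  by move/trivIsetP : tF => /(_ _ _ _ _ ii') ->//; rewrite preimage_set0 setI0.
- by rewrite -setI_bigcupr -preimage_bigcup; apply: slice_set_measurable.
Qed.

HB.instance Definition _ := isMeasure.Build _ _ _ slice slice0 slice_ge0 slice_sigma_additive.
End Restriction.

(* The product structure nu^{s Pbar} = nu (at s) x nu^{s P}: since s is not in
   sP, the slice of nu^{s Pbar} at (s, a) is nu(a) nu^{sP}. *)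
Section Product.
Variables (G : countType) (mul : G -> G -> G) (inv : G -> G) (e : G).
Hypothesis HG : group_axioms G mul inv e.
Variables (n : nat) (M : 'I_n -> nat) (P : set G) (s : G).
Hypothesis P_e : ~ P e.
Variables (R : realType) (nu : Sf n M -> R).
Hypothesis nu_ge0 : forall x, 0 <= nu x.

Notation E := (lset G mul s P).
Notation E' := (lset G mul s (Pbar G e P)).

Variables (muPb : probability (cylspace G n M E') R)
  (muP : probability (cylspace G n M E) R).
Hypotheses (muPb_prod : is_product_measure G n M R nu E' muPb)
  (muP_prod : is_product_measure G n M R nu E muP).

Lemma lset_Pbar t : E t -> E' t.
Proof. by move=> [p Pp <-]; exists p => //; left. Qed.

Lemma lset_Pbar_s : E' s.
Proof. by case: HG => _ _ mul1 _ _; exists e; [right | apply: mul1]. Qed.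

Lemma lset_notin_s : ~ E s.
Proof.
case: HG => mulA mul1 _ mulV _ [p Pp sp]; apply: P_e.
have : mul (inv s) (mul s p) = mul (inv s) s by rewrite sp.
by rewrite mulA mulV mul1 => <-.
Qed.

Variable a : Sf n M.

Notation sliceP := (slice G n M E E' lset_Pbar s a R muPb).

(* on cylinders, the product formula is the defining property of nu^{s Pbar}
   applied to the cylinder with the extra coordinate s *)
Lemma slice_cyl ts w : sliceP (cyl G n M E ts w) = ((nu a)%:E * muP (cyl G n M E ts w))%E.
Proof.
rewrite /slice /= restrict_cyl muP_prod.
set tsE := [seq t <- ts | `[< E t >]].
pose wa t := if t == s then a else w t.
have s_tsE : s \notin tsE by rewrite mem_filter; apply/negP => /andP[/asboolP /lset_notin_s].
have -> : at_point G n M E' s a `&` cyl G n M E' tsE w = cyl G n M E' (s :: tsE) wa.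
  apply/seteqP; split => x.
    move=> [xa xw] t; rewrite in_cons /wa; case: eqP => [ts_ _|_ /= /xw //].
    by apply: xa; rewrite ts_ mem_seq1.
  move=> xc; split => t tt.
    move: tt; rewrite mem_seq1 => /eqP ts_.
    by rewrite xc ?in_cons ts_ ?eqxx // /wa eqxx.
  rewrite xc ?in_cons ?tt ?orbT // /wa; case: eqP => // ts_.
  by move: tt; rewrite ts_ (negbTE s_tsE).
rewrite muPb_prod /= (negbTE s_tsE) big_cons.
have -> : `[< E' s >] = true by apply/asboolP; apply: lset_Pbar_s.
rewrite /wa eqxx EFinM; congr (_ * _)%E; congr (_%:E).
rewrite /tsE -filter_undup big_filter_cond; apply: eq_big => t.
  by case: (boolp.asboolP (E t)) => Et //=; apply/asboolP; apply: lset_Pbar.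
move=> /andP[/asboolP Et _]; case: eqP => // ts_.
by exfalso; apply: lset_notin_s; move: Et; rewrite ts_.
Qed.

(* both sides are finite measures in A agreeing on cylinders *)
Lemma slice_product A : measurable A -> sliceP A = ((nu a)%:E * muP A)%E.
Proof.
move=> mA; pose scaled := mscale (NngNum (nu_ge0 a)) muP.
rewrite -[RHS]/(scaled A); apply: cylinder_measure_unique => // [|ts w].
  rewrite /slice; apply: (le_lt_trans (probability_le1 _ _)); last exact: ltry.
  by apply: slice_set_measurable.
exact: slice_cyl.
Qed.
End Product.

Lemma measure_disjoint_fin_union d (T : measurableType d) (R : realType)
    (mu : {measure set T -> \bar R}) (I : finType) (F : I -> set T) :
  (forall i, measurable (F i)) -> (forall i i', F i `&` F i' !=set0 -> i = i') ->
  mu (\big[setU/set0]_i F i) = (\sum_i mu (F i))%E.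
Proof.
move=> mF disjF.
have reindex X idx (op : Monoid.com_law idx) (f : I -> X) :
    \big[op/idx]_i f i = \big[op/idx]_(i < #|(xpredT : pred I)|) f (enum_val i).
  by rewrite -big_enum_val; apply: eq_bigl.
rewrite reindex [RHS]reindex measure_bigsetU_ord //.
apply/trivIsetP => i i' _ _ ii'; apply/seteqP; split => // x Fx.
by move: ii'; rewrite (enum_val_inj (disjF _ _ (ex_intro _ x Fx))) eqxx.
Qed.

Lemma sum_uniform_marginal (n : nat) (M : 'I_n -> nat) (k : 'I_n) (R : realType)
    (nu : Sf n M -> R) (F : nat -> \bar R) :
  (0 < M k)%N -> (forall x, 0 <= nu x) -> (forall i, (0 <= F i)%E) ->
  (forall i : 'I_((M k).-1.+1), \sum_(x : Sf n M | x k == i) nu x = (M k)%:R^-1) ->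
  (\sum_(a : Sf n M) (nu a)%:E * F (a k) = ((M k)%:R^-1)%:E * \sum_(i < M k) F i)%E.
Proof.
move=> Mk_gt0 nu_ge0 F_ge0 marg.
rewrite (partition_big (fun a : Sf n M => a k) xpredT) //=.
under eq_bigr => i _.
  under eq_bigr => a /eqP -> do [].
  rewrite -ge0_sume_distrl; last by move=> a _; rewrite lee_fin.
  rewrite sumEFin marg.
  over.
by rewrite -ge0_sume_distrr // (prednK Mk_gt0).
Qed.

Section Bound.
Variables (G : countType) (mul : G -> G -> G) (inv : G -> G) (e : G).
Hypothesis HG : group_axioms G mul inv e.
Variables (n : nat) (M : 'I_n -> nat) (g : 'I_n -> 'I_n -> G -> int).
Hypothesis g_finsupp : forall k m, finsupp G (g k m).
Variables (P : set G) (R : realType) (nu : Sf n M -> R).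
Hypotheses (P_e : ~ P e) (nu_ge0 : forall x, 0 <= nu x).
Variables (N : nat) (d : bool) (j : nat) (s : G) (k : 'I_n).
Hypothesis j_gt0 : (0 < j)%N.

Notation E := (lset G mul s P).
Notation E' := (lset G mul s (Pbar G e P)).
Notation T i := (Zproj G mul inv e n M g N d j s k E (fun b => nat_of_ord (b k) = i)).
Notation T_measurable := (Zproj_measurable G mul inv e HG n M g g_finsupp N d j s k j_gt0).

Variables (muPb : probability (cylspace G n M E') R)
  (muP : probability (cylspace G n M E) R).
Hypotheses (muPb_prod : is_product_measure G n M R nu E' muPb)
  (muP_prod : is_product_measure G n M R nu E muP).

(* the union over B in the definition of u is all of Z^dagger_{j,s,k}: every
   element lies in the piece B = {(a, m) | c_{sa,m} = dagger sgn(g) j} *)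
Lemma u_fun_indic x :
  u_fun G mul inv e n M R g N d j s k P x = \sum_(i < M k) \1_(T i) x.
Proof.
apply: eq_bigr => i _; congr (\1_ _ x); congr (_ @` (_ @` _)).
apply/seteqP; split => [yc [B _ [[Zyc _] yi]] //|yc [Zyc yi]].
exists [set am | Aset G n g k am /\
  yc.2 (mul s am.1) am.2 = sgnb d * sgz (g k am.2 am.1) * j%:Z]; first by move=> am [].
split => //; split => //; split => [am [] //|am Aam notB]; apply/eqP => c_am.
by apply: notB.
Qed.

Lemma integral_u_fun :
  (\int[muP]_x (u_fun G mul inv e n M R g N d j s k P x)%:E =
   \sum_(i < M k) muP (T i))%E.
Proof.
under eq_integral do rewrite u_fun_indic -sumEFin.
rewrite ge0_integral_sum //.
- by apply: eq_bigr => i _; rewrite integral_indic ?setIT //; apply: T_measurable.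
- by move=> i; apply/measurable_EFinP; apply: measurable_indic; apply: T_measurable.
Qed.

Let slice_piece (a : Sf n M) : set (cylspace G n M E') :=
  at_point G n M E' s a `&` restrict G n M E E' (lset_Pbar G mul e P s) @^-1` T (a k).

Let slice_piece_measurable a : measurable (slice_piece a).
Proof. by apply: slice_set_measurable; apply: T_measurable. Qed.

Lemma Zd_cover :
  restr G n M E' @` (phi G n M @` Zd G mul inv e n M g N d j s k) `<=`
  \big[setU/set0]_(a : Sf n M) slice_piece a.
Proof.
move=> _ [_ [yc Zyc <-] <-]; rewrite (bigD1 (yc.1 s)) //=; left; split.
  by move=> [t E't] /=; rewrite mem_seq1 => /eqP ts; rewrite /restr /phi /= ts.
by exists yc.1 => //; exists yc.
Qed.

Lemma Zd_bound :
  (muPb (restr G n M E' @` (phi G n M @` Zd G mul inv e n M g N d j s k)) <=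
   \sum_(a : Sf n M) (nu a)%:E * muP (T (a k)))%E.
Proof.
have Zd_measurable : @measurable _ (cylspace G n M E')
    (restr G n M E' @` (phi G n M @` Zd G mul inv e n M g N d j s k)).
  rewrite (_ : Zd G mul inv e n M g N d j s k =
      [set yc | Zd G mul inv e n M g N d j s k yc /\ True]).
    exact: (T_measurable E' (fun _ => True)).
  by apply/seteqP; split => yc // [].
have cover_measurable : measurable (\big[setU/set0]_(a : Sf n M) slice_piece a).
  by apply: bigsetU_measurable => a _; apply: slice_piece_measurable.
have disjoint_pieces a a' : slice_piece a `&` slice_piece a' !=set0 -> a = a'.
  move=> [x [[xa _] [xa' _]]].
  pose s' : coord G E' := exist _ s (lset_Pbar_s G mul inv e HG P s).
  by rewrite -(xa s') ?(xa' s') // mem_seq1.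
apply: (le_trans (le_measure _ (mem_set Zd_measurable) (mem_set cover_measurable) Zd_cover)).
have union_sum :=
  measure_disjoint_fin_union _ _ _ muPb _ _ slice_piece_measurable disjoint_pieces.
apply: (@le_trans _ _ (\sum_(a : Sf n M) muPb (slice_piece a))%E).
  by rewrite -union_sum lexx.
apply: lee_sum => a _; rewrite -(slice_product G mul inv e HG n M P s P_e R nu
  nu_ge0 muPb muP muPb_prod muP_prod) //; exact: T_measurable.
Qed.
End Bound.

Theorem lemma4p5
  (* the countably infinite group Gamma *)
  (G : countType) (mul : G -> G -> G) (inv : G -> G) (e : G)
  (HG : group_axioms G mul inv e) (Hinf : infinite_set [set: G])
  (* f = M - g in M_n(Z Gamma) *)
  (n : nat) (M : 'I_n -> nat) (HMpos : forall k, (0 < M k)%N)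
  (g : 'I_n -> 'I_n -> G -> int) (Hgfin : forall k m, finsupp G (g k m))
  (Hdom : forall k, \sum_(m < n) norm1Z G (g k m) < (M k)%:Z)
  (* the subsemigroup P *)
  (P : set G) (HPmul : forall a b, P a -> P b -> P (mul a b)) (HPe : ~ P e)
  (HPsupp : forall k m, supp G (g k m) `<=` P)
  (* the probability measure nu on S_f with uniform marginals *)
  (R : realType) (nu : Sf n M -> R) (Hnu0 : forall x, 0 <= nu x)
  (Hnu1 : \sum_(x : Sf n M) nu x = 1)
  (Hmarg : forall (k : 'I_n) (i : 'I_((M k).-1.+1)),
      \sum_(x : Sf n M | x k == i) nu x = (M k)%:R^-1)
  (* N >= Mbar ||(f^* )^{-1}||_{1,oo} *)
  (N : nat)
  (HN : exists h, is_inverse_of_fstar G mul inv e n M R g h /\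
        (((\max_(k < n) M k)%:R)%:E * norm1oo G n R h <= (N%:R)%:E)%E)
  (* j in [N], s in Gamma, k in [n], dagger (d = true is +, d = false is -) *)
  (j : nat) (Hj : (1 <= j <= N)%N) (s : G) (k : 'I_n) (d : bool)
  (* the product measures nu^{s Pbar} and nu^{s P} *)
  (muPb : probability (g_sigma_algebraType
                         (cylinders G n M (lset G mul s (Pbar G e P)))) R)
  (HmuPb : is_product_measure G n M R nu (lset G mul s (Pbar G e P)) muPb)
  (muP : probability (g_sigma_algebraType (cylinders G n M (lset G mul s P))) R)
  (HmuP : is_product_measure G n M R nu (lset G mul s P) muP) :
  (muPb (restr G n M (lset G mul s (Pbar G e P)) @`
           (phi G n M @` Zd G mul inv e n M g N d j s k))
   <= ((M k)%:R^-1)%:E *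
      \int[muP]_x (u_fun G mul inv e n M R g N d j s k P x)%:E)%E.
Proof.
have j_gt0 : (0 < j)%N by case/andP: Hj.
(* the right-hand side is (1/M_k) sum_i nu^{sP}(T_i) = sum_a nu(a) nu^{sP}(T_{a_k}) *)
rewrite (integral_u_fun G mul inv e HG n M g Hgfin P R N d j s k j_gt0 muP).
rewrite -(sum_uniform_marginal n M k R nu (fun i => muP (Zproj G mul inv e n M g N d j s k
  (lset G mul s P) (fun b => nat_of_ord (b k) = i)))) //.
exact: (Zd_bound G mul inv e HG n M g Hgfin P R nu HPe Hnu0 N d j s k j_gt0
  muPb muP HmuPb HmuP).
Qed.
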